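(* Let $G$ be a finite group, $p$ a prime, and $P$ a Sylow $p$-subgroup of $G$. Suppose $\eta(P)$ is strongly closed in $P$ with respect to $G$, and for every $i\ge 0$ the subgroup $\eta(P)^{p^i}$ is weakly closed in $P$ with respect to $G$. Then $\eta$ strongly controls fusion in $G$: for every subset $A\subseteq P$ and every $g\in G$ with $A^g\subseteq P$, there exist $c\in C_G(A)$ and $n\in N_G(\eta(P))$ with $g=cn$.
   Context: For a finite $p$-group $P$, a normal subgroup $N$ of $P$ is powerfully embedded in $P$ if $[N,P]\le N^p$ when $p$ is odd, and $[N,P]\le N^4$ when $p=2$ (here $N^{k}$ denotes the subgroup generated by all $k$-th powers of elements of $N$). $\eta(P)$ denotes the largest powerfully embedded subgroup of $P$ (the product of all powerfully embedded subgroups of $P$). A subgroup $W\le P$ is weakly closed in $P$ with respect to $G$ if for every $g\in G$ with $W^g\le P$ one has $W^g=W$; it is strongly closed in $P$ with respect to $G$ if for every $w\in W$ and $g\in G$ with $w^g\in P$ one has $w^g\in W$. *)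

From mathcomp Require Import all_boot all_fingroup all_solvable.
Set Implicit Arguments. Unset Strict Implicit. Unset Printing Implicit Defensive.
Local Open Scope group_scope.

Section Defs.
Variable gT : finGroupType.

Definition powgen (N : {set gT}) (k : nat) : {set gT} :=
  <<[set x ^+ k | x in N]>>.

Definition powerfully_embedded (p : nat) (N P : {set gT}) : bool :=
  (N <| P) && ([~: N, P] \subset powgen N (if p == 2 then 4 else p)).

Definition eta (p : nat) (P : {set gT}) : {set gT} :=
  <<\bigcup_(N : {group gT} | powerfully_embedded p N P) N>>.

Definition weakly_closed (W P G : {set gT}) : Prop :=
  forall g, g \in G -> W :^ g \subset P -> W :^ g = W.

Definition strongly_closed (W P G : {set gT}) : Prop :=
  forall w g, w \in W -> g \in G -> w ^ g \in P -> w ^ g \in W.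
End Defs.

From mathcomp Require Import all_boot all_fingroup all_solvable.
Set Implicit Arguments. Unset Strict Implicit. Unset Printing Implicit Defensive.
Local Open Scope group_scope.

(* N := eta(P) is powerfully embedded in P, and (as for powerful p-groups) so is
   every agemo 'Mho^j(N), with 'Mho^1('Mho^j(N)) = 'Mho^j.+1(N); hence P acts
   trivially on each factor 'Mho^j(N) / 'Mho^j.+1(N).
   Fusion is then controlled by an Alperin-style induction on the intersections
   Q = T :&: R of a Sylow subgroup T containing N with another Sylow subgroup R.
   If N <= Q, weak closure of N lets a Sylow subgroup of 'N_G(Q) be moved into a
   Sylow subgroup over N.  Otherwise, for i minimal with 'Mho^i.+1(N) <= Q, the
   stabiliser K in 'N_G(Q) of Q >= 'Mho^i.+1(N) >= ... >= 1 has its p'-elements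
   centralising Q, so by the Frattini argument 'N_G(Q) = 'N(K :&: U) 'C(Q) for a
   Sylow subgroup U of 'N_G(Q); since K :&: U properly enlarges Q, induction
   applies to Q <*> (K :&: U). *)

Lemma quotient_Mho n (gT : finGroupType) (H L : {group gT}) :
  H \subset 'N(L) -> 'Mho^n(H) / L = 'Mho^n(H / L).
Proof. by move=> nLH; rewrite /quotient morphim_Mho. Qed.

Lemma commg_normal_sub (gT : finGroupType) (G H : {group gT}) :
  H \subset G -> [~: H, G] <| G.
Proof. by move=> sHG; have := commg_normal H G; rewrite (joing_idPr sHG). Qed.

Section PowerfulEmbedding.
Variable p : nat.
Hypothesis pr_p : prime p.

(* For [p = 2] the paper asks for [[N, P] <= N^4 = 'Mho^2(N)]; the weaker bound
   ['Mho^1('Mho^1(N))] is what commutes with ['Mho^1], see [pe_bound_Mho1]. *)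
Definition pe_bound (gT : finGroupType) (H : {set gT}) : {set gT} :=
  if p == 2 then 'Mho^1('Mho^1(H)) else 'Mho^1(H).

Definition powerful_in (gT : finGroupType) (G H : {group gT}) :=
  (H <| G) && ([~: H, G] \subset pe_bound H).

Lemma pe_bound_sub_Mho1 (gT : finGroupType) (H : {group gT}) :
  pe_bound H \subset 'Mho^1(H).
Proof. by rewrite /pe_bound; case: ifP => _ //; apply: Mho_sub. Qed.

Lemma pe_bound_group (gT : finGroupType) (H : {group gT}) : group_set (pe_bound H).
Proof. by rewrite /pe_bound; case: ifP => _; apply: groupP. Qed.
Canonical pe_bound_groupType (gT : finGroupType) (H : {group gT}) :=
  Group (pe_bound_group H).

Lemma quotient_pe_bound (gT : finGroupType) (H L : {group gT}) :
  H \subset 'N(L) -> pe_bound H / L = pe_bound (H / L).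
Proof.
move=> nLH; rewrite /pe_bound; case: ifP => _; last by rewrite quotient_Mho.
by rewrite quotient_Mho ?quotient_Mho // (subset_trans (Mho_sub _ _)).
Qed.

Lemma pe_bound_Mho1 (gT : finGroupType) (H : {group gT}) :
  pe_bound 'Mho^1(H) = 'Mho^1(pe_bound H).
Proof. by rewrite /pe_bound; case: ifP. Qed.

Lemma expg_p_Mho1_eq1 (gT : finGroupType) (H : {group gT}) x :
  p.-group H -> 'Mho^1(H) = 1 -> x \in H -> x ^+ p = 1.
Proof.
move=> pH triv Hx.
by have := Mho_p_elt 1 Hx (mem_p_elt pH Hx); rewrite expn1 triv => /set1P.
Qed.

Lemma expg_binom2_eq1 (gT : finGroupType) (d : gT) :
  p != 2 -> d ^+ p = 1 -> d ^+ 'C(p, 2) = 1.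
Proof.
move=> p_neq2 dp; have p_gt2 : 2 < p by rewrite ltn_neqAle eq_sym p_neq2 prime_gt1.
have /dvdnP[m ->] : p %| 'C(p, 2) by rewrite prime_dvd_bin // p_gt2.
by rewrite mulnC expgM dp expg1n.
Qed.

Lemma nil_join_commg_sub (gT : finGroupType) (G K B : {group gT}) :
  p.-group G -> K \subset G -> G \subset 'N(B) -> G \subset 'N(K) ->
  K \subset B <*> [~: K, G] -> K \subset B.
Proof.
move=> pG sKG nBG nKG sKBR.
have nBK : K \subset 'N(B) := subset_trans sKG nBG.
have nBR : [~: K, G] \subset 'N(B).
  by apply: subset_trans nBG; rewrite commg_subr (subset_trans sKG) ?normG.
rewrite -quotient_sub1 //; apply/idPn => ntK.
have := quotientS B sKBR; rewrite quotientYidl // quotientR // => sKR.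
have nilG : nilpotent (G / B) by apply: pgroup_nil (quotient_pgroup _ pG).
have nKGb : G / B \subset 'N_(G / B)(K / B) by rewrite subsetI subxx quotient_norms.
have ntK' : K / B != 1 by rewrite -subG1.
have := nil_comm_properl nilG (quotientS B sKG) ntK' nKGb.
by rewrite properE sKR andbF.
Qed.

Section CommgMho.
Variables (gT : finGroupType) (G H : {group gT}).
Hypotheses (pG : p.-group G) (nsHG : H <| G) (sHGb : [~: H, G] \subset pe_bound H).
Hypotheses (triv1 : 'Mho^1([~: H, G]) = 1) (triv2 : [~: [~: 'Mho^1(H), G], G] = 1).

Let sHG : H \subset G := normal_sub nsHG.
Let pH : p.-group H := pgroupS sHG pG.
Let sHGG : [~: H, G] \subset G.
Proof. by rewrite commg_subr (subset_trans sHG) ?normG. Qed.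
Let pHG : p.-group [~: H, G] := pgroupS sHGG pG.

Let expK d : d \in [~: 'Mho^1(H), G] -> d ^+ p = 1.
Proof.
move=> Kd; apply: (expg_p_Mho1_eq1 pHG triv1).
by apply: subsetP Kd; apply: commSg; apply: Mho_sub.
Qed.

Let centK d u : d \in [~: 'Mho^1(H), G] -> u \in G -> commute u d.
Proof.
move=> Kd Gu; apply: commute_sym; apply: (centP _ _ Gu).
by apply: (subsetP _ _ Kd); apply/commG1P.
Qed.

Lemma Mho1_Mho1_cent1 x : p = 2 -> x \in G -> 'Mho^1('Mho^1(H)) \subset 'C[x].
Proof.
move=> p2 Gx; have pM : p.-group 'Mho^1(H) := pgroupS (Mho_sub _ _) pH.
rewrite (MhoE 1 pM) gen_subG; apply/subsetP=> _ /imsetP[w Mw ->].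
rewrite expn1 p2; apply/cent1P/commgP/conjg_fixP.
have dK : [~ w, x] \in [~: 'Mho^1(H), G] := mem_commg Mw Gx.
have Gw : w \in G := subsetP sHG _ (subsetP (Mho_sub 1 H) _ Mw).
rewrite conjXg conjg_mulR expgMn; last exact: centK dK Gw.
by rewrite -p2 (expK dK) mulg1.
Qed.

(* Commutators with ['Mho^1(H)] are central of exponent [p], so
   [(x ^+ p) ^ g = (x * [~ x, g]) ^+ p] expands to [x ^+ p]. *)
Lemma commg_Mho1_eq1 : [~: 'Mho^1(H), G] = 1.
Proof.
apply/commG1P; rewrite (MhoE 1 pH) gen_subG; apply/subsetP=> _ /imsetP[x Hx ->].
rewrite expn1; apply/centP=> g Gg; have Gx : x \in G := subsetP sHG _ Hx.
set c := [~ x, g].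
have Hc : c \in [~: H, G] := mem_commg Hx Gg.
have cb : c \in pe_bound H := subsetP sHGb _ Hc.
have dK : [~ c, x] \in [~: 'Mho^1(H), G].
  by apply: mem_commg Gx; apply: subsetP (pe_bound_sub_Mho1 H) _ cb.
suff ex : (x ^+ p) ^ g = x ^+ p by apply/commgP/conjg_fixP.
have Gc : c \in G := subsetP sHGG _ Hc.
rewrite conjXg conjg_mulR -/c expMg_Rmul; [|exact: centK dK Gc|exact: centK dK Gx].
rewrite (expg_p_Mho1_eq1 pHG triv1 Hc) mulg1.
have [p2 | p_neq2] := eqVneq p 2; last first.
  by rewrite (expg_binom2_eq1 p_neq2 (expK dK)) mulg1.
suff /commgP/eqP-> : commute c x by rewrite expg1n mulg1.
apply/cent1P; apply: (subsetP (Mho1_Mho1_cent1 p2 Gx)).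
by move: cb; rewrite /pe_bound p2.
Qed.

End CommgMho.

Lemma quotient_powerful_in (gT : finGroupType) (G H L : {group gT}) :
  powerful_in G H -> L <| G -> powerful_in (G / L) (H / L).
Proof.
move=> /andP[nsHG sHGb] nsLG; have sHG := normal_sub nsHG; have nLG := normal_norm nsLG.
rewrite /powerful_in quotient_normal //= -quotientR ?(subset_trans sHG) //.
by rewrite -quotient_pe_bound ?(subset_trans sHG) // quotientS.
Qed.

Lemma commg_Mho1_sub (gT : finGroupType) (G H : {group gT}) :
  p.-group G -> powerful_in G H -> [~: 'Mho^1(H), G] \subset 'Mho^1([~: H, G]).
Proof.
move=> pG peH; have /andP[nsHG sHGb] := peH; have sHG := normal_sub nsHG.
have nsRG : [~: H, G] <| G := commg_normal_sub sHG.
have nsBG : 'Mho^1([~: H, G]) <| G := char_normal_trans (Mho_char _ _) nsRG.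
have nsMG : 'Mho^1(H) <| G := char_normal_trans (Mho_char _ _) nsHG.
have nsKG : [~: 'Mho^1(H), G] <| G := commg_normal_sub (normal_sub nsMG).
set K := [~: 'Mho^1(H), G] in nsKG *; set B := 'Mho^1([~: H, G]) in nsBG *.
have nsLG : B <*> [~: K, G] <| G := normalY nsBG (commg_normal_sub (normal_sub nsKG)).
set L := B <*> [~: K, G] in nsLG *.
have nL (A : {set gT}) : A \subset G -> A \subset 'N(L).
  by move=> sAG; apply: subset_trans sAG (normal_norm nsLG).
apply: (nil_join_commg_sub pG (normal_sub nsKG) (normal_norm nsBG) (normal_norm nsKG)).
(* modulo [L] we are in the situation of [commg_Mho1_eq1] *)
rewrite -quotient_sub1 ?nL ?normal_sub //.
have peHb := quotient_powerful_in peH nsLG; have /andP[nsHGb sHGbb] := peHb.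
rewrite /K quotientR ?nL ?(normal_sub nsMG) // quotient_Mho ?nL //.
rewrite (commg_Mho1_eq1 (quotient_pgroup _ pG) nsHGb sHGbb) //.
  rewrite -quotientR ?nL // -quotient_Mho ?nL ?(normal_sub nsRG) //.
  by apply: quotientS1; apply: joing_subl.
rewrite -quotient_Mho ?nL // -!quotientR ?nL ?(normal_sub nsMG) ?(normal_sub nsKG) //.
by apply: quotientS1; apply: joing_subr.
Qed.

Lemma powerful_in_Mho1 (gT : finGroupType) (G H : {group gT}) :
  p.-group G -> powerful_in G H -> powerful_in G 'Mho^1(H).
Proof.
move=> pG peH; have /andP[nsHG _] := peH.
rewrite /powerful_in (char_normal_trans (Mho_char _ _) nsHG) /=.
apply: subset_trans (commg_Mho1_sub pG peH) _.
by rewrite pe_bound_Mho1 MhoS //; case/andP: peH.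
Qed.

Lemma powerful_in_expgMn (gT : finGroupType) (G H : {group gT}) :
  p.-group G -> powerful_in G H -> 'Mho^1('Mho^1(H)) = 1 ->
  {in H &, forall x y, (x * y) ^+ p = x ^+ p * y ^+ p}.
Proof.
move=> pG peH triv x y Hx Hy; have /andP[nsHG sHGb] := peH.
have sHG := normal_sub nsHG; have pH : p.-group H := pgroupS sHG pG.
have [Gx Gy] := (subsetP sHG _ Hx, subsetP sHG _ Hy).
have [p2 | p_neq2] := eqVneq p 2.
  move: sHGb; rewrite /pe_bound p2 /= triv => /trivgP tHG.
  rewrite expgMn //; apply/commgP/eqP/set1P.
  by rewrite -[[set 1]]/(1 : {set gT}) -tHG mem_commg.
have sHGM : [~: H, G] \subset 'Mho^1(H) by move: sHGb; rewrite /pe_bound (negPf p_neq2).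
have cMG : 'Mho^1(H) \subset 'C(G).
  apply/commG1P/trivgP; apply: subset_trans (commg_Mho1_sub pG peH) _.
  by rewrite -triv MhoS.
have dM : [~ y, x] \in 'Mho^1(H) := subsetP sHGM _ (mem_commg Hy Gx).
have cd u : u \in G -> commute u [~ y, x].
  by move=> Gu; apply: commute_sym; apply: (centP (subsetP cMG _ dM)).
rewrite expMg_Rmul; [|exact: cd|exact: cd].
rewrite expg_binom2_eq1 ?mulg1 //.
exact: expg_p_Mho1_eq1 (pgroupS (Mho_sub _ _) pH) triv dM.
Qed.

Lemma Mho1_sub_trivg (gT : finGroupType) (M : {group gT}) :
  p.-group M -> M \subset 'Mho^1(M) -> M :=: 1.
Proof.
move=> pM sMM; apply/eqP; apply/idPn => ntM.
have := Phi_proper ntM; rewrite properE => /andP[_].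
by rewrite (Phi_joing pM) (subset_trans sMM) ?joing_subr.
Qed.

(* Modulo ['Mho^1('Mho^1(H))] the [p]-th power map is a homomorphism on [H], so
   generators of exponent [p] force ['Mho^1(H)] into ['Mho^1('Mho^1(H))]. *)
Lemma powerful_in_Mho1_gen_eq1 (gT : finGroupType) (G H : {group gT}) (S : {set gT}) :
  p.-group G -> powerful_in G H -> S \subset H -> H \subset <<S>> ->
  {in S, forall s, s ^+ p = 1} -> 'Mho^1(H) = 1.
Proof.
move=> pG peH sSH sHS expS; have /andP[nsHG _] := peH.
have sHG := normal_sub nsHG; have pH : p.-group H := pgroupS sHG pG.
have pM : p.-group 'Mho^1(H) := pgroupS (Mho_sub _ _) pH.
have nsMG : 'Mho^1(H) <| G := char_normal_trans (Mho_char _ _) nsHG.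
have nsZG : 'Mho^1('Mho^1(H)) <| G := char_normal_trans (Mho_char _ _) nsMG.
set Z := 'Mho^1('Mho^1(H)) in nsZG *.
have nZH : H \subset 'N(Z) := subset_trans sHG (normal_norm nsZG).
have trivb : 'Mho^1('Mho^1(H / Z)) = 1.
  by rewrite -!quotient_Mho ?(subset_trans (Mho_sub _ _)) // trivg_quotient.
have homb := powerful_in_expgMn (quotient_pgroup Z pG)
  (quotient_powerful_in peH nsZG) trivb.
have Ygrp : group_set [set u in H / Z | u ^+ p == 1].
  apply/group_setP; split; first by rewrite inE group1 expg1n eqxx.
  move=> u v; rewrite !inE => /andP[Hu /eqP pu] /andP[Hv /eqP pv].
  by rewrite groupM // homb // pu pv mulg1 eqxx.
have sHY : H / Z \subset Group Ygrp.
  apply: subset_trans (quotientS Z sHS) _.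
  rewrite /quotient morphim_gen ?(subset_trans sSH) // gen_subG.
  apply/subsetP=> _ /morphimP[s Ns Ss ->].
  by rewrite inE mem_quotient ?(subsetP sSH) //= -morphX // expS // morph1 eqxx.
apply: Mho1_sub_trivg pM _.
rewrite -quotient_sub1 ?(subset_trans (Mho_sub _ _)) //.
rewrite quotient_Mho // (MhoE 1 (quotient_pgroup Z pH)) gen_subG.
apply/subsetP=> _ /imsetP[u Hu ->]; rewrite expn1.
by have := subsetP sHY _ Hu; rewrite inE => /andP[_ /eqP ->]; rewrite inE.
Qed.

Lemma Mho1_Mho_powerful_in (gT : finGroupType) (G N : {group gT}) j :
  p.-group G -> N <| G -> powerful_in G 'Mho^j(N) -> 'Mho^1('Mho^j(N)) = 'Mho^j.+1(N).
Proof.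
move=> pG nsNG peM; have sNG := normal_sub nsNG; have pN := pgroupS sNG pG.
have nsLG : 'Mho^j.+1(N) <| G := char_normal_trans (Mho_char _ _) nsNG.
have nLG := normal_norm nsLG; have nLN := subset_trans sNG nLG.
apply/eqP; rewrite eqEsubset; apply/andP; split; last first.
  rewrite (MhoE j.+1 pN) gen_subG; apply/subsetP=> _ /imsetP[x Nx ->].
  rewrite expnSr expgM.
  have Mx : x ^+ (p ^ j) \in 'Mho^j(N) := Mho_p_elt j Nx (mem_p_elt pN Nx).
  have pM : p.-group 'Mho^j(N) := pgroupS (Mho_sub _ _) pN.
  by have := Mho_p_elt 1 Mx (mem_p_elt pM Mx); rewrite expn1.
have nLM : 'Mho^j(N) \subset 'N('Mho^j.+1(N)) := subset_trans (Mho_sub _ _) nLN.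
rewrite -quotient_sub1 ?(subset_trans (Mho_sub _ _)) // quotient_Mho //.
have pNb : p.-group (N / 'Mho^j.+1(N)) := quotient_pgroup _ pN.
rewrite (@powerful_in_Mho1_gen_eq1 _ _ _ [set x ^+ (p ^ j) | x in N / 'Mho^j.+1(N)]
          (quotient_pgroup _ pG) (quotient_powerful_in peM nsLG)) //.
- rewrite /= quotient_Mho //.
  by apply/subsetP=> _ /imsetP[x Nx ->]; rewrite Mho_p_elt // (mem_p_elt pNb).
- by rewrite /= quotient_Mho // (MhoE j pNb).
move=> _ /imsetP[x Nx ->]; rewrite -expgM -expnSr.
have := Mho_p_elt j.+1 Nx (mem_p_elt pNb Nx).
by rewrite -quotient_Mho // trivg_quotient => /set1P.
Qed.

Lemma powerful_in_Mho (gT : finGroupType) (G N : {group gT}) j :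
  p.-group G -> powerful_in G N -> powerful_in G 'Mho^j(N).
Proof.
move=> pG peN; have /andP[nsNG _] := peN.
elim: j => [|j IHj]; first by rewrite /powerful_in /= Mho0.
have := powerful_in_Mho1 pG IHj.
by rewrite /powerful_in /= (Mho1_Mho_powerful_in pG nsNG IHj).
Qed.

Lemma powerful_in_commg_Mho (gT : finGroupType) (G N : {group gT}) j :
  p.-group G -> powerful_in G N -> [~: 'Mho^j(N), G] \subset 'Mho^j.+1(N).
Proof.
move=> pG peN; have /andP[nsNG _] := peN; have peM := powerful_in_Mho j pG peN.
have /andP[_ sRb] := peM; rewrite -(Mho1_Mho_powerful_in pG nsNG peM).
exact: subset_trans sRb (pe_bound_sub_Mho1 _).
Qed.

End PowerfulEmbedding.

Section CoprimeStability.
Variables (gT : finGroupType) (p : nat).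

Lemma p'elt_commute_commg (z e : gT) (D : {group gT}) :
  p^'.-elt z -> p.-group D -> [~ e, z] \in D -> z \in 'C(D) -> commute e z.
Proof.
move=> p'z pD hD cDz; set h := [~ e, z] in hD.
have hz : h ^ z = h by apply/conjg_fixP/commgP/commute_sym/(centP cDz).
have e_zn n : e ^ (z ^+ n) = e * h ^+ n.
  elim: n => [|n IHn]; first by rewrite expg0 conjg1 mulg1.
  rewrite expgSr conjgM IHn conjMg conjg_mulR -/h conjXg hz expgS.
  exact: esym (mulgA _ _ _).
have hn : h ^+ #[z] = 1.
  by apply: (mulgI e); rewrite mulg1 -e_zn expg_order conjg1.
have p'h : p^'.-elt h by apply: pnat_dvd p'z; rewrite order_dvdn hn.
suff /eqP h1 : h == 1 by apply/commgP; rewrite -/h h1.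
by rewrite -order_eq1; apply/eqP/(pnat_1 (mem_p_elt pD hD) p'h).
Qed.

Definition series_stab (X : {set gT}) (f : nat -> {group gT}) m :=
  [set x in X | [forall t : 'I_m, [forall e in f t, [~ e, x] \in f t.+1]]].

Section SeriesStab.
Variables (X : {group gT}) (f : nat -> {group gT}) (m : nat).
Hypothesis nfX : forall t, X \subset 'N(f t).

Lemma series_stab_group : group_set (series_stab X f m).
Proof.
apply/group_setP; split.
  by rewrite inE group1; apply/forallP=> t; apply/forall_inP=> e _; rewrite commg1 group1.
move=> x y; rewrite !inE => /andP[Xx /forallP hx] /andP[Xy /forallP hy].
rewrite groupM //; apply/forallP=> t; apply/forall_inP=> e fe.
have /forall_inP hxt := hx t; have /forall_inP hyt := hy t.
by rewrite commgMJ groupM ?hyt // memJ_norm ?hxt // (subsetP (nfX t.+1)).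
Qed.

Canonical series_stab_groupType := Group series_stab_group.

Lemma series_stab_normal : series_stab X f m <| X.
Proof.
rewrite /normal; apply/andP; split; first by apply/subsetP=> z; rewrite inE => /andP[].
apply/subsetP=> x Xx; rewrite inE; apply/subsetP=> _ /imsetP[k Kk ->].
move: Kk; rewrite !inE => /andP[Xk /forallP hk].
rewrite groupJ //; apply/forallP=> t; apply/forall_inP=> e fe.
have /forall_inP hkt := hk t.
have [nxt nxt1] := (subsetP (nfX t) x Xx, subsetP (nfX t.+1) x Xx).
by rewrite -{1}(conjgKV x e) -conjRg memJ_norm // hkt // memJ_norm ?groupV.
Qed.

Lemma series_stab_p'cent z :
  (forall t, p.-group (f t)) -> f m = 1%G ->
  z \in series_stab X f m -> p^'.-elt z -> z \in 'C(f 0).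
Proof.
move=> pf fm1; rewrite inE => /andP[_ /forallP hz] p'z.
suff cz u : u <= m -> z \in 'C(f (m - u)) by move/(_ m (leqnn m)): cz; rewrite subnn.
elim: u => [_|u IHu lt_um]; first by rewrite subn0 fm1 /= cent1T inE.
have lt : m - u.+1 < m by rewrite ltn_subrL (leq_ltn_trans _ lt_um).
have /forall_inP hzt := hz (Ordinal lt).
apply/centP=> e fe; apply: commute_sym.
apply: (p'elt_commute_commg p'z (pf (m - u)) _ (IHu (ltnW lt_um))).
by have := hzt e fe; rewrite /= subnSK.
Qed.

End SeriesStab.

Lemma Sylow_mul_p'cent (K S : {group gT}) (Q : {set gT}) :
  K \subset 'N(Q) -> p.-Sylow(K) S ->
  {in K, forall z, p^'.-elt z -> z \in 'C(Q)} -> K \subset 'C_K(Q) * S.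
Proof.
move=> nQK sylS p'c.
have nsCK : 'C_K(Q) <| K by have := subcent_normal K Q; rewrite (setIidPl nQK).
have nCK := normal_norm nsCK.
have pKC : p.-group (K / 'C_K(Q)).
  apply/pgroupP => q pr_q /(Cauchy pr_q) [ub Kub oub].
  have [u Nu /= Ku eub] := morphimP Kub.
  have cK : <[u]> \subset K by rewrite cycle_subG.
  have K_p : u.`_p \in K := subsetP cK _ (cycle_constt p u).
  have K_p' : u.`_p^' \in K := subsetP cK _ (cycle_constt p^' u).
  have C_p' : u.`_p^' \in 'C_K(Q) by rewrite inE K_p' p'c // p_elt_constt.
  have e : coset 'C_K(Q) u = coset 'C_K(Q) u.`_p.
    by rewrite -{1}(consttC p u) morphM ?(subsetP nCK) //= (coset_id C_p') mulg1.
  move: oub; rewrite eub e => oub.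
  have := morph_p_elt (coset_morphism 'C_K(Q)) (subsetP nCK _ K_p) (p_elt_constt p u).
  by rewrite /p_elt oub (pnatE _ pr_q).
have sylSb := morphim_pHall (coset 'C_K(Q)) (subset_trans (pHall_sub sylS) nCK) sylS.
by rewrite -quotientSK // /quotient (pHall_id sylSb pKC).
Qed.

Lemma Frattini_p'cent (X K U : {group gT}) (Q : {set gT}) :
  X \subset 'N(Q) -> K <| X -> p.-Sylow(X) U ->
  {in K, forall z, p^'.-elt z -> z \in 'C(Q)} ->
  X \subset 'N_X(K :&: U) * 'C_X(Q).
Proof.
move=> nQX nsKX sylU p'cK; have sKX := normal_sub nsKX.
have sylS := Sylow_setI_normal nsKX sylU.
have nCX : X \subset 'N('C_X(Q)).
  by have := normal_norm (subcent_normal X Q); rewrite (setIidPl nQX).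
rewrite -{1}(Frattini_arg nsKX sylS) (normC (subset_trans (subsetIl X _) nCX)).
apply: subset_trans (mulSg _ (Sylow_mul_p'cent (subset_trans sKX nQX) sylS p'cK)) _.
rewrite -mulgA mulSGid; first by apply: mulSg; apply: setSI.
by rewrite subsetI normG (subset_trans (pHall_sub sylS) sKX).
Qed.

Lemma nil_norm_joing_notin (Q M : {group gT}) :
  nilpotent (Q <*> M) -> Q \subset 'N(M) -> ~~ (M \subset Q) ->
  exists2 y, y \in M :&: 'N(Q) & y \notin Q.
Proof.
move=> nilJ nMQ nsMQ.
have prQJ : Q \proper Q <*> M.
  by rewrite properE joing_subl; apply: contra nsMQ; apply: subset_trans (joing_subr _ _).
have /properP[_ [y0 /setIP[Jy0 ny0] nQy0]] := nilpotent_proper_norm nilJ prQJ.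
move: Jy0; rewrite /= norm_joinEl // => /mulsgP[q y Qq My ey0].
have nQy : y \in 'N(Q) by rewrite -(mulKg q y) -ey0 groupM ?groupV // (subsetP (normG Q)).
by exists y; [rewrite inE My | apply: contra nQy0 => Qy; rewrite ey0 groupM].
Qed.

End CoprimeStability.

Section Fusion.
Variables (gT : finGroupType) (G P N : {group gT}) (p : nat).
Hypotheses (sylP : p.-Sylow(G) P) (nsNP : N <| P).
Hypothesis commg_Mho_sub : forall j, [~: 'Mho^j(N), P] \subset 'Mho^j.+1(N).
Hypothesis Mho_wclosed : forall j, weakly_closed 'Mho^j(N) P G.

Let pP : p.-group P := pHall_pgroup sylP.
Let sNP : N \subset P := normal_sub nsNP.
Let pN : p.-group N := pgroupS sNP pP.

Lemma MhoJ_norm j m : m \in 'N(N) -> 'Mho^j(N) :^ m = 'Mho^j(N).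
Proof. by move=> nNm; rewrite -MhoJ (normP nNm). Qed.

Lemma Mho_trivg : 'Mho^(logn p #|N|)(N) = 1.
Proof.
apply/trivgP; rewrite /= (MhoE _ pN) gen_subG.
by apply/subsetP=> _ /imsetP[x Nx ->]; rewrite -(card_pgroup pN) expg_cardG.
Qed.

Lemma Mho_sub_threshold (Q : {group gT}) :
  ~~ (N \subset Q) -> exists2 i, 'Mho^i.+1(N) \subset Q & ~~ ('Mho^i(N) \subset Q).
Proof.
move=> nsNQ; have exi : exists i, 'Mho^i(N) \subset Q.
  by exists (logn p #|N|); rewrite Mho_trivg sub1G.
case: (ex_minnP exi) => [[|i]] sMQ min_i; first by rewrite Mho0 (negPf nsNQ) in sMQ.
by exists i => //; apply/negP=> /min_i; rewrite ltnn.
Qed.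

Definition Syl_over (T : {group gT}) := (T \in 'Syl_p(G)) && (N \subset T).

Lemma Syl_over_conj (T : {group gT}) :
  Syl_over T -> exists2 m, m \in 'N_G(N) & T :=: P :^ m.
Proof.
case/andP; rewrite inE => sylT sNT.
have [x Gx defT] := Sylow_trans sylP sylT.
exists x => //; rewrite inE Gx /=.
have sNP' : 'Mho^0(N) :^ x^-1 \subset P by rewrite Mho0 sub_conjgV -defT.
by have := Mho_wclosed (groupVr Gx) sNP'; rewrite Mho0 => /normP; rewrite groupV.
Qed.

Lemma Syl_over_wclosed (T : {group gT}) j : Syl_over T -> weakly_closed 'Mho^j(N) T G.
Proof.
move=> oT x Gx; have [m /setIP[Gm nNm] ->] := Syl_over_conj oT.
rewrite -sub_conjgV -conjsgM => /Mho_wclosed; rewrite groupM ?groupV // => /(_ isT) e.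
by rewrite -(mulgKV m x) conjsgM e MhoJ_norm.
Qed.

Lemma Syl_over_Mho (T : {group gT}) j : Syl_over T ->
  [/\ 'Mho^j(N) \subset T, T \subset 'N('Mho^j(N)) &
      [~: 'Mho^j(N), T] \subset 'Mho^j.+1(N)].
Proof.
move=> oT; have [m /setIP[Gm nNm] ->] := Syl_over_conj oT.
have nMP : P \subset 'N('Mho^j(N)) := char_norm_trans (Mho_char _ _) (normal_norm nsNP).
rewrite -(MhoJ_norm j nNm) -(MhoJ_norm j.+1 nNm) normJ -conjsRg !conjSg.
by rewrite (subset_trans (Mho_sub _ _)).
Qed.

Lemma Syl_overJ (T : {group gT}) x :
  T \in 'Syl_p(G) -> x \in G -> N \subset T :^ x -> Syl_over (T :^ x)%G.
Proof. by rewrite !inE => sylT Gx sN; rewrite /Syl_over sN andbT inE pHallJ. Qed.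

Lemma Syl_card_setI_eq (T R : {group gT}) :
  T \in 'Syl_p(G) -> R \in 'Syl_p(G) -> #|P| <= #|T :&: R| -> T :=: R.
Proof.
rewrite !inE => sylT sylR le_P_TR.
have [cT cR] : #|T| = #|P| /\ #|R| = #|P|.
  by rewrite (card_Hall sylP) (card_Hall sylT) (card_Hall sylR).
have /eqP eTR : T :&: R == T by rewrite eqEcard subsetIl cT.
by apply/eqP; rewrite eqEcard -eTR subsetIr /= eTR cT cR.
Qed.

Section Step.
Variables (T R : {group gT}).
Hypotheses (oT : Syl_over T) (sylR : R \in 'Syl_p(G)).
Let Q := (T :&: R)%G.
Hypothesis ltQP : #|Q| < #|P|.
Hypothesis IH : forall (T1 R1 : {group gT}) (A : {set gT}),
  Syl_over T1 -> R1 \in 'Syl_p(G) -> A \subset T1 :&: R1 -> #|Q| < #|T1 :&: R1| ->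
  exists2 c, c \in 'C_G(A) & N \subset R1 :^ c.

Let sylT : p.-Sylow(G) T. Proof. by case/andP: oT; rewrite inE. Qed.
Let sylR' : p.-Sylow(G) R. Proof. by move: sylR; rewrite inE. Qed.
Let sQT : Q \subset T := subsetIl T R.
Let sQR : Q \subset R := subsetIr T R.
Let sQG : Q \subset G := subset_trans sQT (pHall_sub sylT).

Lemma ltQ_norm (H : {group gT}) :
  p.-Sylow(G) H -> Q \subset H -> #|Q| < #|'N_H(Q)|.
Proof.
move=> sylH sQH; apply/proper_card/nilpotent_proper_norm.
  exact: pgroup_nil (pHall_pgroup sylH).
by rewrite properEcard sQH (card_Hall sylH) -(card_Hall sylP).
Qed.

Lemma sub_Sylow_norm (U : {group gT}) : p.-Sylow('N_G(Q)) U -> Q \subset U.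
Proof.
move=> sylU; apply: normal_sub_max_pgroup (Hall_max sylU) _ (normalSG sQG).
exact: pgroupS sQT (pHall_pgroup sylT).
Qed.

Lemma step_normalizer_Sylow : exists2 T' : {group gT}, Syl_over T' &
  exists2 U : {group gT}, p.-Sylow('N_G(Q)) U & U \subset T'.
Proof.
have pNT : p.-group 'N_T(Q) := pgroupS (subsetIl _ _) (pHall_pgroup sylT).
have [U sylU sNU] := Sylow_superset (setSI _ (pHall_sub sylT)) pNT.
have [T1 sylT1 sUT1] :=
  Sylow_superset (subset_trans (pHall_sub sylU) (subsetIl G _)) (pHall_pgroup sylU).
have sNTT1 : 'N_T(Q) \subset T :&: T1 by rewrite subsetI subsetIl (subset_trans sNU).
have ltQ : #|Q| < #|T :&: T1| := leq_trans (ltQ_norm sylT sQT) (subset_leq_card sNTT1).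
have SylT1 : T1 \in 'Syl_p(G) by rewrite inE.
have [c /setIP[Gc cNc] sNT1c] := IH oT SylT1 sNTT1 ltQ.
have cQc : c \in 'C(Q) by apply: (subsetP (centS _) _ cNc); rewrite subsetI sQT normG.
exists (T1 :^ c)%G; first exact: Syl_overJ.
exists (U :^ c)%G; last by rewrite conjSg.
by rewrite pHallJ // inE Gc (subsetP (cent_sub Q)).
Qed.

Lemma step_finish (A : {set gT}) (T2 : {group gT}) d :
  A \subset Q -> Syl_over T2 -> d \in 'C_G(Q) -> 'N_R(Q) :^ d \subset T2 ->
  exists2 c, c \in 'C_G(A) & N \subset R :^ c.
Proof.
move=> sAQ oT2 /setIP[Gd cQd] sNRT2.
have eQd : Q :^ d = Q by apply/normP; rewrite (subsetP (cent_sub Q)).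
have SylRd : (R :^ d)%G \in 'Syl_p(G) by rewrite inE pHallJ.
have sNR2 : 'N_R(Q) :^ d \subset T2 :&: R :^ d by rewrite subsetI sNRT2 conjSg subsetIl.
have sAT2 : A \subset T2 :&: R :^ d.
  apply: subset_trans sNR2; rewrite (subset_trans sAQ) //.
  by rewrite -{1}eQd conjSg subsetI sQR normG.
have ltQ : #|Q| < #|T2 :&: R :^ d|.
  by apply: leq_trans (ltQ_norm sylR' sQR) _; rewrite -(cardJg _ d) subset_leq_card.
have [c Cc sNc] := IH oT2 SylRd sAT2 ltQ.
exists (d * c); last by rewrite conjsgM.
by rewrite groupM // (subsetP (setIS G (centS sAQ))) // inE Gd.
Qed.

Section Realign.
Variables (T' U : {group gT}).
Hypotheses (oT' : Syl_over T') (sylU : p.-Sylow('N_G(Q)) U) (sUT' : U \subset T').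

Let sQT' : Q \subset T' := subset_trans (sub_Sylow_norm sylU) sUT'.
Let sylT' : p.-Sylow(G) T'. Proof. by case/andP: oT'; rewrite inE. Qed.
Let pT' : p.-group T' := pHall_pgroup sylT'.

Lemma Mho_series_stab i : 'Mho^i.+1(N) \subset Q -> ~~ ('Mho^i(N) \subset Q) ->
  exists K : {group gT}, [/\ K <| 'N_G(Q), {in K, forall z, p^'.-elt z -> z \in 'C(Q)}
                           & ~~ (K :&: U \subset Q)].
Proof.
move=> sMiQ nsMiQ; set X := 'N_G(Q).
pose f t := if t is t'.+1 then 'Mho^(i.+1 + t')(N)%G else Q.
have sMQ t : 'Mho^(i.+1 + t)(N) \subset Q := subset_trans (Mho_leq _ (leq_addr _ _)) sMiQ.
have nfX t : X \subset 'N(f t).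
  case: t => [|t] /=; first exact: subsetIr.
  apply/subsetP=> z /setIP[Gz nQz]; apply/normP.
  apply: (Syl_over_wclosed oT' Gz).
  by rewrite (subset_trans _ sQT') // -(normP nQz) conjSg.
have pf t : p.-group (f t).
  by case: t => [|t] /=; apply: pgroupS pT'; rewrite ?(subset_trans (sMQ t)).
have f_last : f (logn p #|N|).+1 = 1%G.
  by apply: val_inj; apply/trivgP; rewrite /= -Mho_trivg Mho_leq // leq_addl.
exists (Group (series_stab_group (logn p #|N|).+1 nfX)); split.
- exact: series_stab_normal.
- by move=> z Kz p'z; apply: series_stab_p'cent pf f_last Kz p'z.
have [sMT' nMT' cMT'] := Syl_over_Mho i oT'.
have nilJ : nilpotent (Q <*> 'Mho^i(N)).
  by apply: pgroup_nil (pgroupS _ pT'); rewrite join_subG sQT'.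
have [y /setIP[My nQy] yQ] := nil_norm_joing_notin nilJ (subset_trans sQT' nMT') nsMiQ.
have T'y : y \in T' := subsetP sMT' _ My.
have Xy : y \in X by rewrite inE nQy (subsetP (pHall_sub sylT')).
apply: contra yQ => /subsetP; apply; rewrite inE; apply/andP; split.
  rewrite inE Xy; apply/forallP=> [[t lt_t]]; apply/forall_inP=> e /=.
  case: t lt_t => [|t] _ /= fe.
    rewrite addn0 -invg_comm groupV.
    exact: subsetP cMT' _ (mem_commg My (subsetP sQT' _ fe)).
  have [_ _ cM] := Syl_over_Mho (i.+1 + t) oT'.
  by rewrite addnS; apply: subsetP cM _ (mem_commg fe T'y).
have eqU : 'N_T'(Q) = U.
  apply: (sub_pHall sylU) (pgroupS (subsetIl _ _) pT') _ _.
    by rewrite subsetI sUT' (subset_trans (pHall_sub sylU) (subsetIr _ _)).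
  by rewrite setSI // (pHall_sub sylT').
by rewrite -eqU inE T'y.
Qed.

Section Conjugator.
Variables (A : {set gT}) (x : gT).
Hypotheses (sAQ : A \subset Q) (Xx : x \in 'N_G(Q)) (sNRx : 'N_R(Q) \subset U :^ x).

Lemma realign_N_sub : N \subset Q -> exists2 c, c \in 'C_G(A) & N \subset R :^ c.
Proof.
move=> sNQ; have [Gx nQx] := setIP Xx.
have nNx : N :^ x = N.
  have := Syl_over_wclosed (j := 0) oT Gx; rewrite Mho0; apply.
  by rewrite (subset_trans _ sQT) // -(normP nQx) conjSg.
apply: (@step_finish A (T' :^ x)%G 1 sAQ).
- by apply: Syl_overJ; rewrite ?inE // -nNx conjSg (subset_trans sNQ).
- exact: group1.
by rewrite conjsg1 (subset_trans sNRx) ?conjSg.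
Qed.

(* Frattini splits [x = m * c] with [c] centralising [Q] and [m] normalising
   [Q <*> (K :&: U)], a larger intersection of Sylow subgroups over [N]. *)
Lemma realign_Mho_step i : 'Mho^i.+1(N) \subset Q -> ~~ ('Mho^i(N) \subset Q) ->
  exists2 c, c \in 'C_G(A) & N \subset R :^ c.
Proof.
move=> sMiQ nsMiQ; have [K [nsKX p'cK nsKUQ]] := Mho_series_stab sMiQ nsMiQ.
have /mulsgP[m c /setIP[Xm nSm] /setIP[Xc cQc] defx] :=
  subsetP (Frattini_p'cent (subsetIr G _) nsKX sylU p'cK) x Xx.
have [[Gm nQm] Gc] := (setIP Xm, subsetP (subsetIl G _) c Xc).
pose Q1 := (Q <*> (K :&: U))%G.
have sQ1U : Q1 \subset U by rewrite join_subG sub_Sylow_norm ?subsetIr.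
have eQ1 : Q1 :^ m = Q1 by rewrite /= conjYg (normP nQm) (normP nSm).
have ltQQ1 : #|Q| < #|Q1|.
  apply: proper_card; rewrite properE joing_subl.
  by apply: contra nsKUQ; apply: subset_trans (joing_subr _ _).
have sQ1T' : Q1 \subset T' :&: T' :^ m.
  by rewrite subsetI -{2}eQ1 conjSg andbb (subset_trans sQ1U).
have SylT'm : (T' :^ m)%G \in 'Syl_p(G) by rewrite inE pHallJ.
have [c' /setIP[Gc' cQ1c'] sNc'] :=
  IH oT' SylT'm sQ1T' (leq_trans ltQQ1 (subset_leq_card sQ1T')).
have cQc' : c' \in 'C(Q) := subsetP (centS (joing_subl _ _)) _ cQ1c'.
apply: (@step_finish A ((T' :^ m) :^ c')%G (c^-1 * c') sAQ).
- by apply: Syl_overJ; rewrite // inE pHallJ.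
- by rewrite !inE groupM ?groupV ?Gc ?Gc' // groupM ?groupV.
have : 'N_R(Q) :^ (c^-1 * c') \subset (U :^ x) :^ (c^-1 * c') by rewrite conjSg.
rewrite -conjsgM defx mulgA mulgK => /subset_trans; apply.
by rewrite conjsgM /= !conjSg.
Qed.

End Conjugator.

End Realign.

Lemma Syl_over_step (A : {set gT}) :
  A \subset Q -> exists2 c, c \in 'C_G(A) & N \subset R :^ c.
Proof.
move=> sAQ; have [T' oT' [U sylU sUT']] := step_normalizer_Sylow.
have pNR : p.-group 'N_R(Q) := pgroupS (subsetIl _ _) (pHall_pgroup sylR').
have [x Xx sNRx] := Sylow_subJ sylU (setSI _ (pHall_sub sylR')) pNR.
have [sNQ | nsNQ] := boolP (N \subset Q).
  exact: (realign_N_sub oT' sylU sUT' sAQ Xx sNRx sNQ).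
have [i sMiQ nsMiQ] := Mho_sub_threshold nsNQ.
exact: (realign_Mho_step oT' sylU sUT' sAQ Xx sNRx sMiQ nsMiQ).
Qed.

End Step.

Lemma Syl_over_cent_conj (T R : {group gT}) (A : {set gT}) :
  Syl_over T -> R \in 'Syl_p(G) -> A \subset T :&: R ->
  exists2 c, c \in 'C_G(A) & N \subset R :^ c.
Proof.
move: {2}(#|P| - #|T :&: R|).+1 (ltnSn (#|P| - #|T :&: R|)) => n.
elim: n T R A => // n IHn T R A lt_n oT sylR sA.
have [ltQP | geQP] := ltnP #|T :&: R| #|P|.
  apply: (Syl_over_step oT sylR ltQP) sA => T1 R1 A1 oT1 sylR1 sA1 ltQ1.
  by apply: IHn oT1 sylR1 sA1; apply: leq_trans (ltn_sub2l ltQP ltQ1) _; rewrite -ltnS.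
exists 1; first exact: group1.
by rewrite conjsg1 -(Syl_card_setI_eq _ sylR geQP); case/andP: oT.
Qed.

Theorem fusion_control (A : {set gT}) g :
  A \subset P -> g \in G -> A :^ g \subset P ->
  exists c, exists n, [/\ c \in 'C_G(A), n \in 'N_G(N) & g = c * n].
Proof.
move=> sAP Gg sAgP.
have oP : Syl_over P by rewrite /Syl_over sNP andbT inE.
have sylPg : (P :^ g^-1)%G \in 'Syl_p(G) by rewrite inE pHallJ ?groupV.
have sA : A \subset P :&: P :^ g^-1 by rewrite subsetI sAP -sub_conjgV invgK.
have [c /setIP[Gc cAc] sNc] := Syl_over_cent_conj oP sylPg sA.
have Gn : c^-1 * g \in G by rewrite groupM ?groupV.
have sNn : 'Mho^0(N) :^ (c^-1 * g) \subset P.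
  by rewrite Mho0 -(invgK (c^-1 * g)) sub_conjgV invMg !invgK conjsgM.
exists c, (c^-1 * g); split; [by rewrite inE Gc | | by rewrite mulKVg].
by rewrite inE Gn; apply/normP; have := Mho_wclosed Gn sNn; rewrite Mho0.
Qed.

End Fusion.

Section Eta.
Variables (gT : finGroupType) (P : {group gT}) (p : nat).
Hypothesis pP : p.-group P.

Lemma powgen_Mho (H : {group gT}) i : H \subset P -> powgen H (p ^ i) = 'Mho^i(H).
Proof. by move=> sHP; rewrite /powgen (MhoE i (pgroupS sHP pP)). Qed.

Lemma Mho2_sub_Mho1_Mho1 (H : {group gT}) :
  H \subset P -> 'Mho^2(H) \subset 'Mho^1('Mho^1(H)).
Proof.
move=> sHP; have pH := pgroupS sHP pP; have pM := pgroupS (Mho_sub 1 H) pH.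
rewrite (MhoE 2 pH) gen_subG; apply/subsetP=> _ /imsetP[x Hx ->].
have M1 : x ^+ p \in 'Mho^1(H) by have := Mho_p_elt 1 Hx (mem_p_elt pH Hx); rewrite expn1.
by have := Mho_p_elt 1 M1 (mem_p_elt pM M1); rewrite expn1 -expgM mulnn.
Qed.

Lemma eta_group_set : group_set (eta p P).
Proof. exact: groupP. Qed.
Canonical eta_group := Group eta_group_set.

Lemma powerfully_embedded_sub_eta (N : {group gT}) :
  powerfully_embedded p N P -> N \subset eta p P.
Proof. by move=> peN; apply: subset_trans (subset_gen _); apply: (bigcup_max N). Qed.

Lemma eta_normal : eta p P <| P.
Proof.
rewrite /normal gen_subG; apply/andP; split; first by apply/bigcupsP=> N /andP[/andP[]].
by apply/norms_gen/norms_bigcup/bigcapsP=> N /andP[/andP[]].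
Qed.

(* [eta p P] is generated by powerfully embedded subgroups, so it suffices to see
   each of them centralise [P] modulo [pe_bound (eta p P)]. *)
Lemma eta_powerful_in : powerful_in p P eta_group.
Proof.
have nsEP := eta_normal; have [sEP _] := andP nsEP.
rewrite /powerful_in nsEP /=.
have nsBP : pe_bound p (eta p P) <| P.
  rewrite /pe_bound; case: ifP => _; last exact: char_normal_trans (Mho_char _ _) nsEP.
  exact: char_normal_trans (Mho_char _ _) (char_normal_trans (Mho_char _ _) nsEP).
have nBP := normal_norm nsBP.
rewrite -quotient_cents2 ?(subset_trans sEP) // {1}/eta /quotient morphim_gen; last first.
  exact: subset_trans (subset_gen _) (subset_trans sEP nBP).
rewrite gen_subG; apply/subsetP=> _ /morphimP[u Nu /bigcupP[N peN Nu'] ->].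
have /andP[/andP[sNP _] sNb] := peN.
have sRb : [~: N, P] \subset pe_bound p (eta p P).
  apply: subset_trans sNb _; rewrite /pe_bound.
  have sNE := powerfully_embedded_sub_eta peN.
  case: eqP => [p2 | _]; last by rewrite -(expn1 p) powgen_Mho // MhoS.
  have -> : 4 = (p ^ 2)%N by rewrite p2.
  rewrite (powgen_Mho 2 sNP); apply: subset_trans (Mho2_sub_Mho1_Mho1 sNP) _.
  by rewrite !MhoS.
by apply: (subsetP (quotient_cents2r sRb)); rewrite mem_quotient.
Qed.

End Eta.

Theorem proposition3p5 (gT : finGroupType) (G P : {group gT}) (p : nat) :
  prime p -> P \in 'Syl_p(G) ->
  strongly_closed (eta p P) P G ->
  (forall i : nat, weakly_closed (powgen (eta p P) (p ^ i)) P G) ->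
  forall (A : {set gT}) (g : gT),
    A \subset P -> g \in G -> A :^ g \subset P ->
    exists c, exists n,
      [/\ c \in 'C_G(A), n \in 'N_G(eta p P) & g = c * n].
Proof.
move=> pr_p; rewrite inE => sylP _ wcE.
have pP := pHall_pgroup sylP; have nsEP := eta_normal P p.
apply: (fusion_control (N := eta_group P p) sylP nsEP).
  by move=> j; apply: (powerful_in_commg_Mho pr_p) pP (eta_powerful_in pP).
by move=> j; rewrite -(powgen_Mho pP j (normal_sub nsEP)).
Qed.
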